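(* For every pointed digraph $(G,g)$ and every $n\ge 0$ there is a natural bijection $A_n(G,g)\cong\pi_n(N_\infty G,g)$, where $g$ is regarded as a $0$-cube of the Kan complex $N_\infty G$ and $\pi_n$ is its $n$-th homotopy group (equivalently that of its geometric realization).
   Context: Digraphs: vertex set $V(G)$ with arrows $E(G)\subseteq V(G)^2$ containing the diagonal; digraph maps preserve arrows. Box product $G\otimes H$: arrow $(g,h)\to(g',h')$ iff ($g\to g'$, $h=h'$) or ($g=g'$, $h\to h'$). Interval: digraph on $\{0,\dots,k\}$ with, for each $i<k$, exactly one of $i\to i+1$, $i+1\to i$ as non-degenerate arrows; $\partial J=\{0,k\}$. Shrinking: digraph map of intervals surjective and monotone on vertices; $\mathsf{Shr}$ the category of intervals and shrinkings. Pairs $(G,H)$ with $H$ induced; $(G,H)\otimes(G',H')=(G\otimes G',G\otimes H'\cup H\otimes G')$; maps of pairs $\varphi,\psi$ are homotopic rel $H$ if connected by a chain $\varphi_0,\dots,\varphi_r$ of pair maps agreeing on $H$ with, at each step, either $\varphi_t(x)\to\varphi_{t+1}(x)$ for all $x$ or $\varphi_{t+1}(x)\to\varphi_t(x)$ for all $x$; $[-,-]$ the set of classes. $A_n(G,g)=\mathrm{colim}_{(J_1,\dots,J_n)\in(\mathsf{Shr}^{\mathrm{op}})^n}[\bigotimes_i(J_i,\partial J_i),(G,\{g\})]$. $I_n$: vertices $\{0,\dots,n\}$, non-degenerate arrows $2i\to 2i+1$, $2j+2\to2j+1$; $I_n^{\mathrm{op}}$ reversed. For an interval $J$ with vertices $\{0,\dots,k\}$,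 $N_JG$ is the cubical set with connections with $n$-cubes $\mathrm{Hom}(J^{\otimes n},G)$ (faces insert $0$ or $k$, degeneracies delete coordinates, connections max/min). $r:I^\varepsilon_{n+1}\to I^\varepsilon_n$, $r(x)=\min(x,n)$; $l:I^{-\varepsilon}_{n+1}\to I^\varepsilon_n$, $l(x)=\max(x-1,0)$ (with $I^{+1}=I$, $I^{-1}=I^{\mathrm{op}}$). $N_\infty G=\mathrm{colim}(N_{I_1}G\xrightarrow{r^*}N_{I_2}G\xrightarrow{l^*}N_{I_3^{\mathrm{op}}}G\xrightarrow{r^*}N_{I_4^{\mathrm{op}}}G\xrightarrow{l^*}\cdots)$; it is a Kan complex. *)

From mathcomp Require Import all_boot.
From Stdlib Require Import Relations.Relation_Operators.

Set Implicit Arguments.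
Unset Strict Implicit.
Unset Printing Implicit Defensive.

Record digraph := Digraph {
  vert :> Type;
  arr : vert -> vert -> Prop;
  arr_refl : forall x, arr x x }.

Definition dmap (G H : digraph) (f : G -> H) : Prop :=
  forall x y, arr x y -> arr (f x) (f y).

(* Intervals.  An interval J with vertices {0,..,k}, k = size J, is    *)
(* encoded by the sequence of its edge directions: for i < k the       *)
(* non-degenerate arrow is i -> i+1 if nth false J i, else i+1 -> i.   *)
Definition interval := seq bool.

Definition iarr (J : interval) (x y : nat) : Prop :=
  [/\ x <= size J, y <= size J &
      x = y \/ (y = x.+1 /\ nth false J x) \/ (x = y.+1 /\ ~~ nth false J y)].

(* Shrinkings J -> J' : digraph maps surjective and monotone on        *)
(* vertices (only the values on {0..size J} matter).                   *)
Definition shrinking (J J' : interval) (f : nat -> nat) : Prop :=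
  [/\ (forall x, x <= size J -> f x <= size J'),
      (forall x y, iarr J x y -> iarr J' (f x) (f y)),
      (forall y, y <= size J' -> exists2 x, x <= size J & f x = y) &
      (forall x y, x <= y -> y <= size J -> f x <= f y)].

(* Box product J_1 (x) ... (x) J_n; vertices are the x : 'I_n -> nat   *)
(* with x i <= size (Js i).                                            *)
Definition inbox n (Js : 'I_n -> interval) (x : 'I_n -> nat) : Prop :=
  forall i, x i <= size (Js i).

Definition boxarr n (Js : 'I_n -> interval) (x y : 'I_n -> nat) : Prop :=
  [/\ inbox Js x, inbox Js y &
      (forall j, x j = y j) \/
      exists i, iarr (Js i) (x i) (y i) /\ forall j, j != i -> x j = y j].

(* The subdigraph of the pair (x)_i (J_i, dJ_i): some coordinate is an *)
(* endpoint.                                                           *)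
Definition onbd n (Js : 'I_n -> interval) (x : 'I_n -> nat) : Prop :=
  exists i, x i = 0 \/ x i = size (Js i).

Definition pairmap n (Js : 'I_n -> interval) (G : digraph) (g : G)
    (phi : ('I_n -> nat) -> G) : Prop :=
  (forall x y, boxarr Js x y -> arr (phi x) (phi y)) /\
  (forall x, inbox Js x -> onbd Js x -> phi x = g).

Definition hstep n (Js : 'I_n -> interval) (G : digraph)
    (phi psi : ('I_n -> nat) -> G) : Prop :=
  (forall x, inbox Js x -> arr (phi x) (psi x)) \/
  (forall x, inbox Js x -> arr (psi x) (phi x)).

(* A_n(G,g): colimit over (Shr^op)^n of the sets of homotopy classes.  *)
Definition Arep n (G : digraph) := {Js : 'I_n -> interval & ('I_n -> nat) -> G}.

Inductive Agen n (G : digraph) (g : G) : Arep n G -> Arep n G -> Prop :=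
| Agen_htpy (Js : 'I_n -> interval) (phi psi : ('I_n -> nat) -> G) :
    pairmap Js g phi -> pairmap Js g psi -> hstep Js phi psi ->
    Agen g (existT _ Js phi) (existT _ Js psi)
| Agen_shr (Js Js' : 'I_n -> interval) (f : 'I_n -> nat -> nat)
    (phi : ('I_n -> nat) -> G) :
    (forall i, shrinking (Js' i) (Js i) (f i)) -> pairmap Js g phi ->
    Agen g (existT _ Js phi) (existT _ Js' (fun x => phi (fun i => f i (x i)))).

Definition Aeq n (G : digraph) (g : G) : Arep n G -> Arep n G -> Prop :=
  clos_refl_sym_trans _ (@Agen n G g).

Definition A n (G : digraph) (g : G) :=
  {P : Arep n G -> Prop |
     exists2 a : Arep n G, pairmap (tag a) g (tagged a) & P = Aeq g a}.
Arguments A : clear implicits.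

(* N_oo G.  Level m (m : nat) stands for the (m+1)-st interval in      *)
(* I_1, I_2, I_3^op, I_4^op, I_5, I_6, I_7^op, ...                     *)
(* I_k (eps = true): arrow 2i -> 2i+1 and 2j+2 -> 2j+1, i.e. the edge  *)
(* between i and i+1 points forward iff i is even; I_k^op reversed.    *)
Definition Iseq (k : nat) (eps : bool) : interval :=
  [seq (if eps then ~~ odd i else odd i) | i <- iota 0 k].

Definition Jinf (m : nat) : interval := Iseq m.+1 (m %% 4 < 2).

(* the map J_{m+2} -> J_{m+1} used in the colimit: r if m+1 is odd,  *)
(* l if m+1 is even.                                                   *)
Definition rho (m : nat) (x : nat) : nat :=
  if odd m.+1 then minn x m.+1 else x.-1.

Definition ncube n (G : digraph) (m : nat) (c : ('I_n -> nat) -> G) : Prop :=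
  forall x y, boxarr (fun _ => Jinf m) x y -> arr (c x) (c y).

Definition Nrep n (G : digraph) := {m : nat & ('I_n -> nat) -> G}.

(* generating relation of the sequential colimit of n-cubes *)
Inductive Ngen n (G : digraph) : Nrep n G -> Nrep n G -> Prop :=
| Ngen_box m (c c' : ('I_n -> nat) -> G) :
    ncube m c -> (forall x, inbox (fun _ => Jinf m) x -> c x = c' x) ->
    Ngen (existT _ m c) (existT _ m c')
| Ngen_step m (c : ('I_n -> nat) -> G) :
    ncube m c ->
    Ngen (existT _ m c) (existT _ m.+1 (fun x => c (fun i => rho m (x i)))).

Definition sphere n (G : digraph) (g : G) (m : nat) (c : ('I_n -> nat) -> G) :=
  ncube m c /\ (forall x, inbox (fun _ => Jinf m) x -> onbd (fun _ => Jinf m) x -> c x = g).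

Definition nhtpy n (G : digraph) (g : G) (m : nat) (c c' : ('I_n -> nat) -> G) :=
  exists h : ('I_n.+1 -> nat) -> G,
    [/\ ncube m h,
        (forall y, inbox (fun _ => Jinf m) y -> y ord_max = 0 ->
           h y = c (fun i => y (lift ord_max i))),
        (forall y, inbox (fun _ => Jinf m) y -> y ord_max = size (Jinf m) ->
           h y = c' (fun i => y (lift ord_max i))) &
        (forall y, inbox (fun _ => Jinf m) y ->
           (exists2 j : 'I_n.+1, j != ord_max & y j = 0 \/ y j = size (Jinf m)) ->
           h y = g)].

Definition Pgen n (G : digraph) (g : G) (a b : Nrep n G) : Prop :=
  [/\ sphere g (tag a) (tagged a), sphere g (tag b) (tagged b) &
      Ngen a b \/ (tag a = tag b /\ nhtpy g (tag a) (tagged a) (tagged b))].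

Definition Peq n (G : digraph) (g : G) : Nrep n G -> Nrep n G -> Prop :=
  clos_refl_sym_trans _ (@Pgen n G g).

Definition Pi n (G : digraph) (g : G) :=
  {P : Nrep n G -> Prop |
     exists2 c : Nrep n G, sphere g (tag c) (tagged c) & P = Peq g c}.
Arguments Pi : clear implicits.

Definition Amap n (G H : digraph) (h : G -> H) (a : Arep n G) : Arep n H :=
  existT _ (tag a) (h \o tagged a).
Definition Nmap n (G H : digraph) (h : G -> H) (c : Nrep n G) : Nrep n H :=
  existT _ (tag c) (h \o tagged c).

Definition natural_family n (Phi : forall (G : digraph) (g : G), A n G g -> Pi n G g) :=
  forall (G G' : digraph) (h : G -> G') (g : G), dmap h ->
  forall (P : A n G g) (P' : A n G' (h g)) (a : Arep n G),
    sval P = Aeq g a -> sval P' = Aeq (h g) (Amap h a) ->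
  forall (Q : Pi n G g) (Q' : Pi n G' (h g)) (c : Nrep n G),
    sval Q = Peq g c -> sval Q' = Peq (h g) (Nmap h c) ->
    Phi G g P = Q -> Phi G' (h g) P' = Q'.

(* A representative (J_1, ..., J_n; phi) of A_n(G,g) is sent to the sphere
   obtained by precomposing phi with shrinkings Jinf M -> J_i; these exist
   for all large M because a long enough zigzag shrinks onto any interval.
   Two shrinkings Jinf M -> J are joined by elementary moves, each raising
   a shrinking by one at two consecutive vertices; such a move is arrow-wise
   comparable to the old one, hence a one-step homotopy of the pulled-back
   cube, and an arrow-wise comparison of spheres is a homotopy in N_oo G.
   Since the colimit maps rho are themselves shrinkings, the class of the
   sphere does not depend on choices and respects the relations defining
   A_n.  Conversely, a sphere at level m is already a representative with
   all J_i = Jinf m, and a homotopy of spheres, sliced along its last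
   coordinate, is a chain of one-step homotopies of such representatives. *)

From mathcomp Require Import all_boot zify.
From Stdlib Require Import Relations.Relation_Operators.
From Stdlib Require Import IndefiniteDescription FunctionalExtensionality.
From Stdlib Require Import PropExtensionality ProofIrrelevance.

Set Implicit Arguments.
Unset Strict Implicit.
Unset Printing Implicit Defensive.

Arguments rst_trans {A R x y z} _ _.
Arguments rst_sym {A R x y} _.
Arguments rst_step {A R x y} _.
Arguments rst_refl {A R x}.

Lemma iarr_refl J x : x <= size J -> iarr J x x.
Proof. by move=> hx; split=> //; left. Qed.

Definition shr_steps (K J : interval) (f : nat -> nat) :=
  [/\ f 0 = 0, f (size K) = size J &
      forall x, x < size K -> f x.+1 = f x \/
        (f x.+1 = (f x).+1 /\ nth false J (f x) = nth false K x)].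

Section ShrinkingSteps.
Variables (K J : interval) (f : nat -> nat).
Hypothesis hf : shr_steps K J f.

Lemma shr_steps_mono x y : x <= y -> y <= size K -> f x <= f y.
Proof.
case: (hf) => _ _ hs; elim: y => [|y IH]; first by rewrite leqn0 => /eqP->.
rewrite leq_eqVlt => /orP[/eqP-> //|hxy] hy.
by have := IH hxy (ltnW hy); case: (hs y hy) => [->|[-> _]]; lia.
Qed.

Lemma shr_steps_le x : x <= size K -> f x <= size J.
Proof. by move=> hx; case: (hf) => _ <- _; exact: shr_steps_mono. Qed.

Lemma shr_steps_iarr x y : iarr K x y -> iarr J (f x) (f y).
Proof.
case: (hf) => _ _ hs [hx hy [e|[[e hn]|[e hn]]]]; subst.
  exact: iarr_refl (shr_steps_le hy).
- split; [exact: shr_steps_le | exact: shr_steps_le |].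
  by case: (hs x hy) => [->|[-> e]]; [left | right; left; rewrite e].
- split; [exact: shr_steps_le | exact: shr_steps_le |].
  by case: (hs y hx) => [->|[-> e]]; [left | right; right; rewrite e].
Qed.

Lemma shr_steps_surj y : y <= size J -> exists2 x, x <= size K & f x = y.
Proof.
case: (hf) => f0 fK hs hy.
have ex : exists x, (y <= f x) && (x <= size K) by exists (size K); rewrite fK hy leqnn.
case: (ex_minnP ex) => -[|x] /andP[h1 h2] hmin; first by exists 0; rewrite // f0 in h1 *; lia.
exists x.+1 => //.
have : ~~ ((y <= f x) && (x <= size K)) by apply/negP => /hmin; lia.
by rewrite (ltnW h2) andbT -ltnNge; case: (hs x h2) => [|[]]; lia.
Qed.

Lemma shrinking_of_steps : shrinking K J f.
Proof.
split; [exact: shr_steps_le | exact: shr_steps_iarr | exact: shr_steps_surj |].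
exact: shr_steps_mono.
Qed.

Lemma shr_steps_rise x : x <= size K -> f x < size J ->
  exists w, [/\ x <= w, w < size K, f w = f x & f w.+1 = (f x).+1].
Proof.
case: (hf) => _ fK fs; move Ha: (f x) => a.
move Hd: (size K - x) => d; elim: d x Hd Ha => [|d IH] x Hd fx hx ha.
  have ex : x = size K by lia.
  by rewrite ex fK in fx; lia.
have hxK : x < size K by lia.
case: (fs x hxK) => [e|[e _]]; last by exists x; rewrite e fx.
case: (IH x.+1) => //; [lia | by rewrite e | move=> w [h1 h2 h3 h4]].
by exists w; split => //; lia.
Qed.

End ShrinkingSteps.

Lemma steps_of_shrinking K J f : shrinking K J f -> shr_steps K J f.
Proof.
case=> hb hm hs hmo.
have f0 : f 0 = 0 by case: (hs 0 (leq0n _)) => x hx e; have := hmo 0 x (leq0n _) hx; lia.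
split => //.
  case: (hs (size J) (leqnn _)) => x hx e.
  by have := hmo x (size K) hx (leqnn _); have := hb _ (leqnn (size K)); lia.
move=> x hx; have mo := hmo x x.+1 (leqnSn _) hx.
case hn: (nth false K x).
  have : iarr K x x.+1 by split=> //; [exact: ltnW | right; left].
  by move/hm => [_ _ [->|[[-> e]|[e _]]]]; [left | right | lia].
have : iarr K x.+1 x by split=> //; [exact: ltnW | right; right; rewrite hn].
move/hm => [_ _ [->|[[e' e]|[-> e]]]]; [by left | lia |].
by right; split=> //; apply/negbTE.
Qed.

Lemma shr_steps_comp K J I f h :
  shr_steps K J f -> shr_steps J I h -> shr_steps K I (h \o f).
Proof.
move=> hf [h0 hJ hs]; case: (hf) => f0 fK fs.
split; [by rewrite /= f0 | by rewrite /= fK |].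
move=> x hx; case: (fs x hx) => [/= ->|[e n]]; first by left.
have hlt : f x < size J by have := shr_steps_le hf hx; rewrite e.
rewrite /= e.
by case: (hs _ hlt) => [->|[-> n2]]; [left | right; rewrite n2 n].
Qed.

Lemma shr_steps_id J : shr_steps J J id.
Proof. by split=> // x _; right. Qed.

Lemma size_Iseq N eps : size (Iseq N eps) = N.
Proof. by rewrite size_map size_iota. Qed.

Lemma nth_Iseq N eps x : x < N ->
  nth false (Iseq N eps) x = (if eps then ~~ odd x else odd x).
Proof. by move=> hx; rewrite (nth_map 0) ?size_iota // nth_iota. Qed.

Lemma size_Jinf m : size (Jinf m) = m.+1.
Proof. exact: size_Iseq. Qed.

Lemma nth_Jinf m x : x <= m ->
  nth false (Jinf m) x = (if m %% 4 < 2 then ~~ odd x else odd x).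
Proof. by move=> hx; rewrite /Jinf nth_Iseq. Qed.

(* A zigzag whose first edge has the direction of the first edge of J      *)
(* sends it onto that edge; otherwise its first two edges are collapsed.   *)
Lemma Iseq_shr_steps J :
  exists N0, forall N eps, N0 <= N -> exists f, shr_steps (Iseq N eps) J f.
Proof.
elim: J => [|d J [N0 IH]].
  by exists 0 => N eps _; exists (fun=> 0); split=> // x _; left.
exists N0.+2 => -[|[|N]] eps // hN.
case: (eqVneq eps d) => [<-|hne].
- have [f [f0 fN fs]] := IH N.+1 (~~ eps) (ltac:(lia)).
  exists (fun x => if x is x'.+1 then (f x').+1 else 0); split => //.
    by rewrite size_Iseq -(size_Iseq N.+1 (~~ eps)) fN.
  rewrite size_Iseq => -[_|x hx]; first by right; rewrite f0 nth_Iseq //; case: (eps).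
  have hx' : x < size (Iseq N.+1 (~~ eps)) by rewrite size_Iseq.
  case: (fs x hx') => [->|[-> e]]; [by left | right; split => //].
  by rewrite [nth _ (_ :: J) _]/= e !nth_Iseq //=; case: (eps); case: (odd x).
- have [f [f0 fN fs]] := IH N eps (ltac:(lia)).
  exists (fun x => if x is x'.+2 then (f x').+1 else 0); split => //.
    by rewrite size_Iseq -(size_Iseq N eps) fN.
  rewrite size_Iseq => -[|[|x]] hx; first by left.
    by right; rewrite f0 nth_Iseq //=; move: hne; case: (eps); case: (d).
  have hx' : x < size (Iseq N eps) by rewrite size_Iseq.
  case: (fs x hx') => [->|[-> e]]; [by left | right; split => //].
  by rewrite [nth _ (_ :: J) _]/= e !nth_Iseq //= !negbK.
Qed.

Lemma Jinf_shr_steps J :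
  exists M0, forall M, M0 <= M -> exists f, shr_steps (Jinf M) J f.
Proof. by case: (Iseq_shr_steps J) => N0 h; exists N0 => M hM; apply/h/leqW. Qed.

Lemma Jinf_dir_succ m :
  (m.+1 %% 4 < 2) = (if odd m then ~~ (m %% 4 < 2) else m %% 4 < 2).
Proof.
have := modn2 m; have h4 : m %% 4 < 4 by rewrite ltn_mod.
by case: (odd m) => /= h; apply/idP/idP; lia.
Qed.

Lemma rho_shr_steps m : shr_steps (Jinf m.+1) (Jinf m) (rho m).
Proof.
rewrite /rho oddS; split; first by case: (odd m).
  by rewrite !size_Jinf; case: (odd m) => /=; lia.
move=> x; rewrite size_Jinf => hx; have := Jinf_dir_succ m.
case ho: (odd m) => /= dir.
- case: x hx => [|x] hx; first by left.
  right; split => //; rewrite !nth_Jinf ?dir ?oddS; try lia.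
  by case: (m %% 4 < 2); case: (odd x).
- case: (ltnP x m.+1) => hxm; last by left; lia.
  by right; split; [lia | rewrite !nth_Jinf ?dir //; lia].
Qed.

Lemma inbox_pullback n (Js Ks : 'I_n -> interval) F x :
  (forall i, shr_steps (Ks i) (Js i) (F i)) -> inbox Ks x ->
  inbox Js (fun i => F i (x i)).
Proof. by move=> hF hx i; exact: (shr_steps_le (hF i) (hx i)). Qed.

Lemma pairmap_pullback n (Js Ks : 'I_n -> interval) (G : digraph) (g : G) phi F :
  pairmap Js g phi -> (forall i, shr_steps (Ks i) (Js i) (F i)) ->
  pairmap Ks g (fun x => phi (fun i => F i (x i))).
Proof.
move=> [harr hbd] hF; split.
- move=> x y [hx hy hxy]; apply: harr; split; try exact: inbox_pullback.
  case: hxy => [e|[i [hi he]]]; [by left => j; rewrite e | right; exists i].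
  by split; [exact: shr_steps_iarr | move=> j /he ->].
- move=> x hx [i hi]; apply: hbd; first exact: inbox_pullback.
  by exists i; case: (hF i) => f0 fK _; case: hi => ->; [left | right].
Qed.

Definition res n (y : 'I_n.+1 -> nat) : 'I_n -> nat := fun i => y (lift ord_max i).

Lemma inbox_res n m (y : 'I_n.+1 -> nat) :
  inbox (fun _ => Jinf m) y -> inbox (fun _ => Jinf m) (res y).
Proof. by move=> hy i; apply: hy. Qed.

(* The homotopy is u on the slices y_n <= t0 and v beyond; t0 is the      *)
(* first vertex of Jinf M with an outgoing forward edge, which exists as   *)
(* soon as Jinf M has two edges.                                            *)
Lemma nhtpy_of_arr n (G : digraph) (g : G) M (u v : ('I_n -> nat) -> G) :
  0 < M -> sphere g M u -> sphere g M v ->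
  (forall x, inbox (fun _ => Jinf M) x -> arr (u x) (v x)) -> nhtpy g M u v.
Proof.
move=> M0 [hu hubd] [hv hvbd] huv.
pose t0 := if M %% 4 < 2 then 0 else 1.
have t0le : t0 <= 1 by rewrite /t0; case: ifP.
have fwd_t0 : nth false (Jinf M) t0.
  by rewrite nth_Jinf /t0; [case: (M %% 4 < 2) | lia].
exists (fun y => if y ord_max <= t0 then u (res y) else v (res y)); split.
- move=> y y' [hy hy' [e|[i [hi he]]]].
    have -> : y' = y by apply: functional_extensionality => j; rewrite e.
    exact: arr_refl.
  case: (unliftP ord_max i) => [i0|] ei; subst i.
  + have -> : y' ord_max = y ord_max by apply/esym/he/neq_lift.
    have hr : boxarr (fun _ => Jinf M) (res y) (res y').
      split; try exact: inbox_res; right; exists i0; split => // j hj.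
      by apply: he; apply: contra hj => /eqP/lift_inj ->.
    by case: ifP => _; [exact: hu | exact: hv].
  + have -> : res y' = res y.
      by apply: functional_extensionality => j; apply/esym/he; rewrite eq_sym neq_lift.
    case: hi => _ _ hi.
    case: (leqP (y ord_max) t0) => h1; case: (leqP (y' ord_max) t0) => h2;
      try exact: arr_refl.
    * by case: hi => [|[[]|[]]] *; try lia; exact: huv (inbox_res hy).
    * case: hi => [|[[]|[e hn]]] *; try lia.
      have e' : y' ord_max = t0 by lia.
      by rewrite e' fwd_t0 in hn.
- by move=> y hy ->.
- by move=> y hy ->; rewrite size_Jinf ifN // -ltnNge; lia.
- move=> y hy [j hj hje].
  case: (unliftP ord_max j) => [j0 ej|ej]; subst j; last by rewrite eqxx in hj.
  have hb : onbd (fun _ => Jinf M) (res y) by exists j0.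
  by case: ifP => _; [apply: hubd | apply: hvbd] => //; exact: inbox_res.
Qed.

Definition distn (a b : nat) := (a - b) + (b - a).

Definition dist_sum N (f f' : nat -> nat) := \sum_(x < N) distn (f x) (f' x).

Lemma dist_sumC N f f' : dist_sum N f f' = dist_sum N f' f.
Proof. by apply: eq_bigr => x _; rewrite /distn addnC. Qed.

Lemma dist_sum_lt N (f f2 f' : nat -> nat) :
  (forall x, x < N -> f2 x = f x \/ f x < f2 x <= f' x) ->
  (exists2 x, x < N & f2 x != f x) -> dist_sum N f2 f' < dist_sum N f f'.
Proof.
move=> h [x hx hne]; rewrite /dist_sum (bigD1 (Ordinal hx)) //.
rewrite [X in _ < X](bigD1 (Ordinal hx)) //= -addSn leq_add //.
  by case: (h x hx) => [e|]; [rewrite e eqxx in hne | rewrite /distn; lia].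
by apply: leq_sum => i _; case: (h i (ltn_ord i)) => [->//|]; rewrite /distn; lia.
Qed.

Lemma first_difference N (f f' : nat -> nat) : (exists2 x, x <= N & f x != f' x) ->
  exists x0, [/\ x0 <= N, f x0 != f' x0 & forall x, x < x0 -> f x = f' x].
Proof.
case=> x hx hne; have ex : exists x, (x <= N) && (f x != f' x) by exists x; rewrite hx.
case: (ex_minnP ex) => x0 /andP[hx0 hne0] hmin; exists x0; split => // y hy.
apply/eqP/negPn/negP => hn.
by have := hmin y; rewrite hn andbT (leq_trans (ltnW hy) hx0) => /(_ isT); lia.
Qed.

Definition raise2 (f : nat -> nat) p x :=
  if (x == p.+1) || (x == p.+2) then (f x).+1 else f x.

Section Raise.
Variables (K J : interval) (f : nat -> nat) (p : nat).
Hypotheses (hf : shr_steps K J f) (hp : p.+2 < size K).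
Hypothesis flat : f p.+2 = f p.

Lemma raise2_flat x : p <= x <= p.+2 -> f x = f p.
Proof.
move=> /andP[h1 h2]; have := shr_steps_mono hf h1 (leq_trans h2 (ltnW hp)).
by have := shr_steps_mono hf h2 (ltnW hp); rewrite flat; lia.
Qed.

Lemma raise2_out x : x != p.+1 -> x != p.+2 -> raise2 f p x = f x.
Proof. by move=> h1 h2; rewrite /raise2 (negbTE h1) (negbTE h2). Qed.

Lemma raise2_in x : p < x <= p.+2 -> raise2 f p x = (f p).+1.
Proof.
case/andP=> h1 h2; have [->|->] : x = p.+1 \/ x = p.+2 by lia.
  by rewrite /raise2 eqxx raise2_flat //; lia.
by rewrite /raise2 eqxx orbT flat.
Qed.

Lemma raise2_shr_steps :
  f p.+3 = (f p).+1 -> nth false J (f p) = nth false K p -> shr_steps K J (raise2 f p).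
Proof.
move=> rise dir; case: (hf) => f0 fK fs; split.
- by rewrite raise2_out ?f0.
- by rewrite raise2_out ?fK //; apply/eqP; lia.
- move=> x hx; case: (eqVneq x p) => [->|hxp].
    by right; rewrite raise2_in ?raise2_out ?leqnn //; apply/eqP; lia.
  case: (eqVneq x p.+1) => [->|hxp1]; first by left; rewrite !raise2_in ?leqnSn ?ltnSn.
  case: (eqVneq x p.+2) => [->|hxp2].
    by left; rewrite raise2_out ?raise2_in ?rise ?leqnn //; apply/eqP; lia.
  rewrite !raise2_out //; try by apply/eqP; lia.
  exact: fs.
Qed.

Lemma raise2_adj : f p.+3 = (f p).+1 ->
  (forall x, x <= size K -> iarr J (f x) (raise2 f p x)) \/
  (forall x, x <= size K -> iarr J (raise2 f p x) (f x)).
Proof.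
move=> rise; have hle x : x <= size K -> f x <= size J by exact: shr_steps_le.
have hJ : f p < size J by rewrite -rise; apply: hle.
have key x : x <= size K -> raise2 f p x = f x \/ raise2 f p x = (f p).+1 /\ f x = f p.
  move=> hx; case: (boolP (p < x <= p.+2)) => hin.
    by right; rewrite raise2_in // raise2_flat //; case/andP: hin => /ltnW ->.
  by left; apply: raise2_out; apply: contra hin => /eqP ->; rewrite ?leqnSn ?ltnSn //= ltnW.
case dJ : (nth false J (f p)); [left | right] => x hx;
  (case: (key x hx) => [->|[-> ->]]; [exact: iarr_refl (hle x hx) |]);
  split; lia.
Qed.

End Raise.

(* f collapses the edge x1 which f' maps onto the edge e of J starting at  *)
(* f x1, and f maps a later edge w onto e.  Edges of Jinf alternate in      *)
(* direction, so w - x1 is even and f is constant on [w-2, w].             *)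
Lemma Jinf_raise_site M J f f' x1 :
  shr_steps (Jinf M) J f -> shr_steps (Jinf M) J f' -> x1 <= M ->
  f x1 = f' x1 -> f x1.+1 < f' x1.+1 ->
  exists2 p, [/\ x1 <= p, p.+2 < size (Jinf M), f p = f x1, f p.+2 = f p &
                 f p.+3 = (f p).+1] & nth false J (f p) = nth false (Jinf M) p.
Proof.
move=> hf hf' hx1 e hlt; case: (hf) => _ _ fs; case: (hf') => _ _ fs'.
rewrite -ltnS -(size_Jinf M) in hx1.
have [fx fx' dx1] : [/\ f x1.+1 = f x1, f' x1.+1 = (f x1).+1 &
    nth false J (f x1) = nth false (Jinf M) x1].
  case: (fs x1 hx1) => [e1|[e1 _]]; case: (fs' x1 hx1) => [e2|[e2 d2]]; try lia.
  by rewrite -e in e2 d2; split.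
have hJ : f x1.+1 < size J by rewrite fx -fx' (shr_steps_le hf').
have [w [hw1 hw2 fw fw1]] := shr_steps_rise hf hx1 hJ.
have dw : nth false J (f x1) = nth false (Jinf M) w.
  by case: (fs w hw2) => [|[_ <-]]; [rewrite fw1 fw => ?; exfalso; lia | rewrite fw fx].
rewrite size_Jinf in hw2.
have odd_w : odd w = odd x1.
  by move: dw; rewrite dx1 !nth_Jinf; try lia; case: (M %% 4 < 2) => // /negb_inj.
have hw : x1.+2 <= w.
  case: (ltnP x1.+1 w) => // hle; have ew : w = x1.+1 by lia.
  by rewrite ew /= in odd_w; case: (odd x1) odd_w.
have ewp : w = (w.-2).+2 by lia.
have le1 : f x1 <= f w.-2 by apply: (shr_steps_mono hf); rewrite ?size_Jinf; lia.
have le2 : f w.-2 <= f w by apply: (shr_steps_mono hf); rewrite ?size_Jinf; lia.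
have fp : f w.-2 = f x1 by lia.
exists w.-2; first split; rewrite ?size_Jinf -?ewp ?fp ?fw ?fw1 ?fx //; try lia.
have odd_p : odd w.-2 = odd x1 by rewrite -odd_w {2}ewp /= negbK.
by rewrite dx1 !nth_Jinf ?odd_p //; lia.
Qed.

Lemma shr_steps_closer M J f f' x0 :
  shr_steps (Jinf M) J f -> shr_steps (Jinf M) J f' ->
  x0 <= M.+1 -> f x0 < f' x0 -> (forall x, x < x0 -> f x = f' x) ->
  exists f2, [/\ shr_steps (Jinf M) J f2, dist_sum M.+2 f2 f' < dist_sum M.+2 f f' &
    (forall x, x <= M.+1 -> iarr J (f x) (f2 x)) \/
    (forall x, x <= M.+1 -> iarr J (f2 x) (f x))].
Proof.
move=> hf hf'; case: (hf) => f0 _ _; case: (hf') => f0' _ _.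
case: x0 => [|x1] hx0 hlt hmin; first by rewrite f0 f0' in hlt.
have [p [hp1 hp fp flat rise] dir] := Jinf_raise_site hf hf' hx0 (hmin x1 (ltnSn _)) hlt.
exists (raise2 f p); split.
- exact: raise2_shr_steps.
- apply: dist_sum_lt; last first.
    exists p.+2; first by rewrite size_Jinf in hp; lia.
    by rewrite (raise2_in hf hp flat) ?flat; [apply/eqP; lia | lia].
  move=> x hx; case: (boolP (p < x <= p.+2)) => hin; last first.
    by left; apply: raise2_out; apply: contra hin => /eqP ->; lia.
  right; rewrite (raise2_in hf hp flat) //.
  have fxp : f x = f p by apply: (raise2_flat hf hp flat); lia.
  have : f x1 <= f x1.+1 by apply: (shr_steps_mono hf); rewrite ?size_Jinf; lia.
  have : f' x1.+1 <= f' x by apply: (shr_steps_mono hf'); rewrite ?size_Jinf; lia.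
  lia.
- by have := raise2_adj hf hp flat rise; rewrite size_Jinf.
Qed.

Section Pullbacks.
Variables (n : nat) (G : digraph) (g : G).

Lemma Peq_box m (c c' : ('I_n -> nat) -> G) :
  sphere g m c -> sphere g m c' -> (forall x, inbox (fun _ => Jinf m) x -> c x = c' x) ->
  Peq g (existT _ m c) (existT _ m c').
Proof. by move=> hc hc' e; apply: rst_step; split => //; left; constructor => //; case: hc. Qed.

Lemma Peq_hstep M (u v : ('I_n -> nat) -> G) : 0 < M -> sphere g M u -> sphere g M v ->
  hstep (fun _ => Jinf M) u v -> Peq g (existT _ M u) (existT _ M v).
Proof.
move=> M0 hu hv [] h; [apply: rst_step | apply: rst_sym; apply: rst_step];
  by split => //; right; split => //; exact: nhtpy_of_arr.
Qed.

Lemma sphere_rho m (c : ('I_n -> nat) -> G) :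
  sphere g m c -> sphere g m.+1 (fun x => c (fun i => rho m (x i))).
Proof. by move=> hc; exact: (pairmap_pullback hc (fun=> rho_shr_steps m)). Qed.

Lemma Peq_rho m (c : ('I_n -> nat) -> G) : sphere g m c ->
  Peq g (existT _ m c) (existT _ m.+1 (fun x => c (fun i => rho m (x i)))).
Proof.
by move=> hc; apply: rst_step; split; [| exact: sphere_rho | left; constructor; case: hc].
Qed.

Definition is_pairmap (a : Arep n G) := pairmap (tag a) g (tagged a).

Definition pullcube M (phi : ('I_n -> nat) -> G) (F : 'I_n -> nat -> nat) : Nrep n G :=
  existT _ M (fun y => phi (fun i => F i (y i))).

Definition is_pullback (a : Arep n G) (c : Nrep n G) :=
  sphere g (tag c) (tagged c) /\ exists F : 'I_n -> nat -> nat,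
    (forall i, shr_steps (Jinf (tag c)) (tag a i) (F i)) /\
    forall y, inbox (fun _ => Jinf (tag c)) y -> tagged c y = tagged a (fun i => F i (y i)).

Lemma Jinf_shr_steps_all (Js : 'I_n -> interval) M0 :
  exists M F, M0 <= M /\ forall i, shr_steps (Jinf M) (Js i) (F i).
Proof.
have [N0 hN0] := functional_choice _ (fun i => Jinf_shr_steps (Js i)).
pose M := maxn M0 (\max_i N0 i).
have hM i : exists f, shr_steps (Jinf M) (Js i) f.
  by apply: hN0; exact: leq_trans (leq_bigmax i) (leq_maxr _ _).
have [F hF] := functional_choice _ hM.
by exists M, F; split => //; exact: leq_maxl.
Qed.

Lemma is_pullback_pullcube Js phi M F : pairmap Js g phi ->
  (forall i, shr_steps (Jinf M) (Js i) (F i)) ->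
  is_pullback (existT _ Js phi) (pullcube M phi F).
Proof. by move=> hphi hF; split; [exact: (pairmap_pullback hphi hF) | exists F]. Qed.

Lemma is_pullback_exists a : is_pairmap a -> exists c, is_pullback a c.
Proof.
case: a => Js phi ha; have [M [F [_ hF]]] := Jinf_shr_steps_all Js 0.
by exists (pullcube M phi F); exact: is_pullback_pullcube.
Qed.

Lemma is_pullback_rho a m c : is_pullback a (existT _ m c) ->
  is_pullback a (existT _ m.+1 (fun x => c (fun i => rho m (x i)))).
Proof.
case=> /= hs [F [hF hc]]; split; first exact: sphere_rho.
exists (fun i => F i \o rho m); split => [i|y hy /=].
  exact: shr_steps_comp (rho_shr_steps m) (hF i).
by apply: hc => i; exact: (shr_steps_le (rho_shr_steps m) (hy i)).
Qed.

Lemma is_pullback_raise a m c M : m <= M -> is_pullback a (existT _ m c) ->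
  exists c', is_pullback a (existT _ M c') /\ Peq g (existT _ m c) (existT _ M c').
Proof.
move=> hmM hc; rewrite -(subnKC hmM); elim: (M - m) => [|d [c' [hc' hP]]].
  by rewrite addn0; exists c; split => //; exact: rst_refl.
rewrite addnS; eexists; split; first exact: is_pullback_rho hc'.
by apply: rst_trans hP (Peq_rho _); case: hc'.
Qed.

Section FixedPairMap.
Variables (M : nat) (Js : 'I_n -> interval) (phi : ('I_n -> nat) -> G).
Hypotheses (M0 : 0 < M) (hphi : pairmap Js g phi).

Lemma Peq_pullcube_adj F F2 i0 :
  (forall i, shr_steps (Jinf M) (Js i) (F i)) ->
  (forall i, shr_steps (Jinf M) (Js i) (F2 i)) ->
  (forall j, j != i0 -> F2 j = F j) ->
  (forall x, x <= M.+1 -> iarr (Js i0) (F i0 x) (F2 i0 x)) \/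
  (forall x, x <= M.+1 -> iarr (Js i0) (F2 i0 x) (F i0 x)) ->
  Peq g (pullcube M phi F) (pullcube M phi F2).
Proof.
move=> hF hF2 hj hadj; apply: Peq_hstep => //;
  [exact: (pairmap_pullback hphi hF) | exact: (pairmap_pullback hphi hF2) |].
have hyi y : inbox (fun _ => Jinf M) y -> y i0 <= M.+1 by move/(_ i0); rewrite size_Jinf.
case: hadj => hadj; [left | right] => y hy; apply: (proj1 hphi);
  (split; try exact: (inbox_pullback hF hy); try exact: (inbox_pullback hF2 hy));
  by right; exists i0; split; [exact: hadj _ (hyi y hy) | move=> j /hj ->].
Qed.

(* Induction on the distance between F i0 and F' i0: at the first vertex *)
(* where they differ, the smaller one is raised towards the other.       *)
Lemma Peq_pullcube_coord i0 F F' :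
  (forall i, shr_steps (Jinf M) (Js i) (F i)) ->
  (forall i, shr_steps (Jinf M) (Js i) (F' i)) ->
  (forall j, j != i0 -> F j = F' j) ->
  Peq g (pullcube M phi F) (pullcube M phi F').
Proof.
move: {2}(dist_sum M.+2 (F i0) (F' i0)).+1 (ltnSn (dist_sum M.+2 (F i0) (F' i0))) => d.
elim: d F F' => [//|d IH] F F' hD hF hF' hj.
case: (boolP [exists x : 'I_M.+2, F i0 x != F' i0 x]) => [/existsP[x hx]|hex]; last first.
  apply: Peq_box; [exact: (pairmap_pullback hphi hF) | exact: (pairmap_pullback hphi hF') |].
  move=> y hy /=; congr phi; apply: functional_extensionality => i.
  case: (eqVneq i i0) => [->|hi]; last by rewrite hj.
  have hyi : y i0 < M.+2 by have := hy i0; rewrite size_Jinf.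
  by move/existsPn: hex => /(_ (Ordinal hyi)) /negPn /eqP.
have [x0 [hx0 hne hmin]] : exists x0, [/\ x0 <= M.+1, F i0 x0 != F' i0 x0 &
    forall x, x < x0 -> F i0 x = F' i0 x].
  by apply: first_difference; exists x => //; rewrite -ltnS.
clear x hx.
wlog hlt : F F' hD hF hF' hj hne hmin / F i0 x0 < F' i0 x0.
  move=> step; case: (ltngtP (F i0 x0) (F' i0 x0)) => [|hgt|e]; first exact: step.
    apply/rst_sym/step; rewrite // 1?dist_sumC 1?eq_sym //.
      by move=> j /hj.
    by move=> x /hmin.
  by rewrite e eqxx in hne.
have [f2 [hf2 hD2 hadj]] := shr_steps_closer (hF i0) (hF' i0) hx0 hlt hmin.
pose F2 j := if j == i0 then f2 else F j.
have hF2 i : shr_steps (Jinf M) (Js i) (F2 i) by rewrite /F2; case: eqP => [->|].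
apply: rst_trans (_ : Peq g _ (pullcube M phi F2)) _.
  apply: (Peq_pullcube_adj (i0 := i0) hF hF2); first by move=> j hj'; rewrite /F2 (negbTE hj').
  by rewrite /F2 /= eqxx.
apply: IH => //; first by rewrite /F2 eqxx; lia.
by move=> j hj'; rewrite /F2 (negbTE hj') hj.
Qed.

Lemma Peq_pullcube F F' :
  (forall i, shr_steps (Jinf M) (Js i) (F i)) ->
  (forall i, shr_steps (Jinf M) (Js i) (F' i)) ->
  Peq g (pullcube M phi F) (pullcube M phi F').
Proof.
move=> hF hF'; pose Fk (k : nat) (j : 'I_n) := if j < k then F' j else F j.
have hFk k i : shr_steps (Jinf M) (Js i) (Fk k i) by rewrite /Fk; case: ifP.
suff : forall k, k <= n -> Peq g (pullcube M phi F) (pullcube M phi (Fk k)).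
  have -> : F' = Fk n by apply: functional_extensionality => j; rewrite /Fk ltn_ord.
  exact.
elim=> [_|k IH hk].
  have -> : Fk 0 = F by apply: functional_extensionality.
  exact: rst_refl.
apply: rst_trans (IH (ltnW hk)) (Peq_pullcube_coord (i0 := Ordinal hk) _ _ _) => // j hj.
have hjk : (j : nat) != k by apply: contra hj => /eqP e; apply/eqP/val_inj.
by rewrite /Fk [j < k.+1]ltnS [j <= k]leq_eqVlt (negbTE hjk).
Qed.

End FixedPairMap.

(* Any two pullbacks of a pair map are homotopic: raise both to a common   *)
(* level, where they differ only in the choice of shrinkings.              *)
Lemma is_pullback_Peq a c1 c2 : is_pairmap a ->
  is_pullback a c1 -> is_pullback a c2 -> Peq g c1 c2.
Proof.
case: a c1 c2 => Js phi [m1 c1] [m2 c2] /= hphi h1 h2.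
have hm1 : m1 <= (maxn m1 m2).+1 by apply/leqW/leq_maxl.
have hm2 : m2 <= (maxn m1 m2).+1 by apply/leqW/leq_maxr.
have [c1' [[/= s1 [F1 [hF1 e1]]] p1]] := is_pullback_raise hm1 h1.
have [c2' [[/= s2 [F2 [hF2 e2]]] p2]] := is_pullback_raise hm2 h2.
apply: rst_trans p1 (rst_trans _ (rst_sym p2)).
apply: rst_trans (_ : Peq g _ (pullcube _ phi F1)) _.
  by apply: Peq_box => //; exact: pairmap_pullback hphi hF1.
apply: rst_trans (Peq_pullcube (ltn0Sn _) hphi hF1 hF2) _.
by apply: rst_sym; apply: Peq_box => //; exact: pairmap_pullback hphi hF2.
Qed.

End Pullbacks.

Section Comparison.
Variables (n : nat) (G : digraph) (g : G).

Definition Arep_of_cube (c : Nrep n G) : Arep n G :=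
  existT _ (fun _ => Jinf (tag c)) (tagged c).

Lemma Agen_pairmap (a b : Arep n G) : Agen g a b -> is_pairmap g a /\ is_pairmap g b.
Proof.
case=> [Js phi psi h1 h2 _|Js Js' f phi hf hphi]; first by split.
by split => //; apply: (pairmap_pullback hphi) => i; exact: steps_of_shrinking.
Qed.

Lemma Aeq_pairmap (a b : Arep n G) : Aeq g a b -> (is_pairmap g a <-> is_pairmap g b).
Proof.
elim=> [x y /Agen_pairmap [hx hy] | // | x y _ IH | x y z _ IH1 _ IH2].
- by [].
- exact: iff_sym IH.
- exact: iff_trans IH1 IH2.
Qed.

Lemma Agen_Peq (a b : Arep n G) (c c' : Nrep n G) :
  Agen g a b -> is_pullback g a c -> is_pullback g b c' -> Peq g c c'.
Proof.
case=> [Js phi psi h1 h2 hst|Js Js' f phi hf hphi] hc hc'.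
- have [M [F [M1 hF]]] := Jinf_shr_steps_all Js 1.
  have p1 := is_pullback_Peq (a := existT _ Js phi) h1 hc (is_pullback_pullcube h1 hF).
  have p2 := is_pullback_Peq (a := existT _ Js psi) h2 (is_pullback_pullcube h2 hF) hc'.
  apply: rst_trans p1 (rst_trans _ p2).
  apply: Peq_hstep => //; [exact: (pairmap_pullback h1 hF) | exact: (pairmap_pullback h2 hF) |].
  by case: hst => hst; [left | right] => y hy; apply/hst/(inbox_pullback hF hy).
- case: c' hc' => m c0 [/= s [F [hF e]]].
  apply: (is_pullback_Peq (a := existT _ Js phi) hphi hc); split => //.
  exists (fun i => f i \o F i); split => //.
  by move=> i; exact: (shr_steps_comp (hF i) (steps_of_shrinking (hf i))).
Qed.

Lemma Aeq_Peq (a b : Arep n G) (c c' : Nrep n G) : Aeq g a b -> is_pairmap g a ->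
  is_pullback g a c -> is_pullback g b c' -> Peq g c c'.
Proof.
move=> hab; elim: hab c c' => {a b} [a b hab|a|a b hab IH|a b d hab IH1 _ IH2] c c' ha hc hc'.
- exact: Agen_Peq hab hc hc'.
- exact: is_pullback_Peq ha hc hc'.
- exact/rst_sym/(IH _ _ _ hc' hc)/(Aeq_pairmap hab).
- have hb : is_pairmap g b by apply/(Aeq_pairmap hab).
  have [c'' hc''] := is_pullback_exists hb.
  exact: rst_trans (IH1 _ _ ha hc hc'') (IH2 _ _ hb hc'' hc').
Qed.

Definition ext_last (x : 'I_n -> nat) (t : nat) : 'I_n.+1 -> nat :=
  fun j => if unlift ord_max j is Some i then x i else t.

Lemma ext_last_max x t : ext_last x t ord_max = t.
Proof. by rewrite /ext_last unlift_none. Qed.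

Lemma ext_last_lift x t i : ext_last x t (lift ord_max i) = x i.
Proof. by rewrite /ext_last liftK. Qed.

Lemma inbox_ext_last m x t : inbox (fun _ => Jinf m) x -> t <= m.+1 ->
  inbox (fun _ => Jinf m) (ext_last x t).
Proof.
rewrite -(size_Jinf m) => hx ht j.
by case: (unliftP ord_max j) => [i|] ->; rewrite ?ext_last_lift ?ext_last_max.
Qed.

Lemma boxarr_ext_last m x t y : inbox (fun _ => Jinf m) x -> t <= m.+1 ->
  boxarr (fun _ => Jinf m) x y -> boxarr (fun _ => Jinf m) (ext_last x t) (ext_last y t).
Proof.
move=> hx ht [_ hy hxy]; split; try exact: inbox_ext_last.
case: hxy => [e|[i [hi he]]].
  by left => j; case: (unliftP ord_max j) => [i|] ->; rewrite ?ext_last_lift ?ext_last_max ?e.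
right; exists (lift ord_max i); rewrite !ext_last_lift; split => // j hj.
case: (unliftP ord_max j) => [j0|] ej; subst j; rewrite ?ext_last_lift ?ext_last_max //.
by apply: he; apply: contra hj => /eqP ->.
Qed.

Section Slices.
Variables (m : nat) (h : ('I_n.+1 -> nat) -> G).
Hypotheses (hh : ncube m h) (hbd : forall y, inbox (fun _ => Jinf m) y ->
  (exists2 j : 'I_n.+1, j != ord_max & y j = 0 \/ y j = size (Jinf m)) -> h y = g).

Definition slice t x := h (ext_last x t).

Lemma pairmap_slice t : t <= m.+1 -> pairmap (fun _ => Jinf m) g (slice t).
Proof.
move=> ht; split=> [x y hxy|x hx [i hi]].
  by apply/hh/boxarr_ext_last => //; case: hxy.
apply: hbd; first exact: inbox_ext_last.
by exists (lift ord_max i); [rewrite eq_sym neq_lift | rewrite ext_last_lift].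
Qed.

Lemma hstep_slice t : t < m.+1 -> hstep (fun _ => Jinf m) (slice t) (slice t.+1).
Proof.
move=> ht; have last_arr a b : iarr (Jinf m) a b -> forall x, inbox (fun _ => Jinf m) x ->
    boxarr (fun _ => Jinf m) (ext_last x a) (ext_last x b).
  move=> hab x hx; case: (hab) => ha hb _; rewrite size_Jinf in ha hb.
  split; try exact: inbox_ext_last.
  right; exists ord_max; rewrite !ext_last_max; split => // j hj.
  by case: (unliftP ord_max j) hj => [j0|] ->; rewrite ?ext_last_lift // eqxx.
have [ht1 ht2] : t <= size (Jinf m) /\ t.+1 <= size (Jinf m) by rewrite size_Jinf; lia.
case dir : (nth false (Jinf m) t); [left | right] => x hx; apply/hh/last_arr => //.
  by split => //; right; left.
by split => //; right; right; rewrite dir.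
Qed.

End Slices.

Lemma Aeq_box (Js : 'I_n -> interval) (u v : ('I_n -> nat) -> G) :
  pairmap Js g u -> pairmap Js g v -> (forall x, inbox Js x -> u x = v x) ->
  Aeq g (existT _ Js u) (existT _ Js v).
Proof.
move=> hu hv e; apply: rst_step; apply: Agen_htpy => //.
by left => x hx; rewrite e //; exact: arr_refl.
Qed.

(* A homotopy of spheres at level m is a chain of m+2 one-step homotopies of *)
(* pair maps: slice it along its last coordinate.                           *)
Lemma nhtpy_Aeq m (c c' : ('I_n -> nat) -> G) : sphere g m c -> sphere g m c' ->
  nhtpy g m c c' ->
  Aeq g (existT _ (fun _ => Jinf m) c) (existT _ (fun _ => Jinf m) c').
Proof.
move=> hc hc' [h [hh h0 h1 hbd]].
have hs := pairmap_slice hh hbd.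
have res_ext x t : (fun i => ext_last x t (lift ord_max i)) = x.
  by apply: functional_extensionality => i; rewrite ext_last_lift.
have chain t : t <= m.+1 -> Aeq g (existT _ (fun _ => Jinf m) (slice h 0))
                                  (existT _ (fun _ => Jinf m) (slice h t)).
  elim: t => [_|t IH ht]; first exact: rst_refl.
  apply: rst_trans (IH (ltnW ht)) (rst_step _).
  by apply: Agen_htpy; [exact/hs/ltnW | exact: hs | exact: hstep_slice].
apply: rst_trans (Aeq_box hc (hs 0 (leq0n _)) _) _.
  by move=> x hx; rewrite /slice h0 ?res_ext ?ext_last_max //; exact: inbox_ext_last.
apply: rst_trans (chain _ (leqnn _)) (Aeq_box (hs _ (leqnn _)) hc' _).
move=> x hx; rewrite /slice h1 ?res_ext //; first exact: inbox_ext_last.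
by rewrite ext_last_max size_Jinf.
Qed.

Lemma Peq_Aeq (c c' : Nrep n G) : Peq g c c' -> Aeq g (Arep_of_cube c) (Arep_of_cube c').
Proof.
elim=> [a b [s1 s2 [hab|[et hh]]] | a | a b _ IH | a b d _ IH1 _ IH2].
- move: s1 s2; case: hab => [m c0 c1 hc0 he|m c0 hc0] s1 s2.
    exact: Aeq_box s1 s2 he.
  apply: rst_step; apply: (Agen_shr (f := fun _ => rho m)) => // i.
  exact/shrinking_of_steps/rho_shr_steps.
- case: a b s1 s2 et hh => [m c0] [m' c1] /= s1 s2 em hh; subst m'.
  exact: nhtpy_Aeq.
- exact: rst_refl.
- exact: rst_sym IH.
- exact: rst_trans IH1 IH2.
Qed.

Lemma is_pullback_Aeq (a : Arep n G) (c : Nrep n G) :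
  is_pairmap g a -> is_pullback g a c -> Aeq g a (Arep_of_cube c).
Proof.
case: a c => Js phi [m c] ha [/= s [F [hF e]]].
apply: rst_trans (rst_step (Agen_shr (f := F) _ ha)) (Aeq_box _ s _) => //.
- by move=> i; exact: shrinking_of_steps.
- exact: pairmap_pullback ha hF.
- by move=> x hx; rewrite e.
Qed.

Lemma is_pullback_self (c : Nrep n G) : sphere g (tag c) (tagged c) ->
  is_pullback g (Arep_of_cube c) c.
Proof. by move=> s; split => //; exists (fun=> id); split => // i; exact: shr_steps_id. Qed.

End Comparison.

Lemma rst_classP T (R : T -> T -> Prop) x y :
  clos_refl_sym_trans T R x y <-> clos_refl_sym_trans T R x = clos_refl_sym_trans T R y.
Proof.
split=> [hxy|->]; last exact: rst_refl.
apply: functional_extensionality => z; apply: propositional_extensionality.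
by split=> h; [exact: rst_trans (rst_sym hxy) h | exact: rst_trans hxy h].
Qed.

Lemma proj1_sig_inj T (P : T -> Prop) (x y : sig P) : proj1_sig x = proj1_sig y -> x = y.
Proof. by case: x y => x px [y py] /= e; exact: subset_eq_compat. Qed.

Section Bijection.
Variables (n : nat) (G : digraph) (g : G).

Definition Phi_class (S : Arep n G -> Prop) : Nrep n G -> Prop :=
  fun c => exists a c1, [/\ S a, is_pullback g a c1 & Peq g c1 c].

Lemma Phi_class_Aeq a c : is_pairmap g a -> is_pullback g a c ->
  Phi_class (Aeq g a) = Peq g c.
Proof.
move=> ha hc; apply: functional_extensionality => c'; apply: propositional_extensionality.
split=> [[a' [c1 [haa' hc1 hc1c']]]|hcc']; last by exists a, c; split => //; exact: rst_refl.
exact: rst_trans (Aeq_Peq haa' ha hc hc1) hc1c'.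
Qed.

Definition Psi_class (S : Nrep n G -> Prop) : Arep n G -> Prop :=
  fun a => exists c, S c /\ Aeq g (Arep_of_cube c) a.

Lemma Psi_class_Peq c : Psi_class (Peq g c) = Aeq g (Arep_of_cube c).
Proof.
apply: functional_extensionality => a; apply: propositional_extensionality.
split=> [[c' [hcc' ha]]|ha]; last by exists c; split => //; exact: rst_refl.
exact: rst_trans (Peq_Aeq hcc') ha.
Qed.

Lemma Phi_class_is_Pi (P : A n G g) :
  exists2 c : Nrep n G, sphere g (tag c) (tagged c) & Phi_class (sval P) = Peq g c.
Proof.
case: P => S [a ha eS] /=; subst S; have [c hc] := is_pullback_exists ha.
by exists c; [case: hc | exact: Phi_class_Aeq].
Qed.

Definition Phi (P : A n G g) : Pi n G g := exist _ _ (Phi_class_is_Pi P).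

Lemma Psi_class_is_A (Q : Pi n G g) :
  exists2 a : Arep n G, is_pairmap g a & Psi_class (sval Q) = Aeq g a.
Proof.
by case: Q => S [c hc eS] /=; subst S; exists (Arep_of_cube c); rewrite ?Psi_class_Peq.
Qed.

Definition Psi (Q : Pi n G g) : A n G g := exist _ _ (Psi_class_is_A Q).

Lemma A_rep_pairmap (P : A n G g) a : sval P = Aeq g a -> is_pairmap g a.
Proof.
case: P => S [a0 ha0 eS] /=; subst S; move/rst_classP => h0.
exact: (proj1 (Aeq_pairmap h0) ha0).
Qed.

Lemma Phi_val (P : A n G g) a c : sval P = Aeq g a -> is_pullback g a c ->
  sval (Phi P) = Peq g c.
Proof. by move=> eP hc; rewrite /= eP; apply: Phi_class_Aeq (A_rep_pairmap eP) hc. Qed.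

Lemma Phi_bij : bijective Phi.
Proof.
exists Psi.
- case=> S [a ha eS]; apply: proj1_sig_inj => /=.
  have [c hc] := is_pullback_exists ha.
  rewrite eS (Phi_class_Aeq ha hc) Psi_class_Peq.
  by apply/esym/rst_classP; exact: is_pullback_Aeq.
- case=> S [c hc eS]; apply: proj1_sig_inj => /=.
  by rewrite eS Psi_class_Peq; apply: Phi_class_Aeq => //; exact: is_pullback_self.
Qed.

End Bijection.

Section Naturality.
Variables (n : nat) (G G' : digraph) (h : G -> G') (g : G).
Hypothesis hh : dmap h.

Lemma pairmap_map (Js : 'I_n -> interval) phi :
  pairmap Js g phi -> pairmap Js (h g) (h \o phi).
Proof.
case=> harr hbd; split=> [x y hxy | x hx hb /=]; first exact/hh/harr.
by rewrite hbd.
Qed.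

Lemma is_pullback_map (a : Arep n G) c :
  is_pullback g a c -> is_pullback (h g) (Amap h a) (Nmap h c).
Proof.
case=> s [F [hF e]]; split; first exact: pairmap_map.
by exists F; split => // y hy /=; rewrite e.
Qed.

Lemma Peq_map (c c' : Nrep n G) : Peq g c c' -> Peq (h g) (Nmap h c) (Nmap h c').
Proof.
elim=> [a b [s1 s2 hab] | a | a b _ IH | a b d _ IH1 _ IH2].
- apply: rst_step; split; try exact: pairmap_map.
  case: hab => [hab|[et [H [hH hH0 hH1 hHbd]]]].
    left; case: hab {s1 s2} => [m c0 c1 hc he|m c0 hc].
      by apply: Ngen_box => [u v huv | z hz /=]; [exact/hh/hc | rewrite he].
    by apply: (Ngen_step (c := h \o c0)) => u v huv; exact/hh/hc.
  right; split => //; exists (h \o H); split => [u v huv | u hu e | u hu e | u hu e] /=.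
  + exact/hh/hH.
  + by rewrite hH0.
  + by rewrite hH1.
  + by rewrite hHbd.
- exact: rst_refl.
- exact: rst_sym IH.
- exact: rst_trans IH1 IH2.
Qed.

End Naturality.

Theorem mainTheorem5 (n : nat) :
  exists Phi : forall (G : digraph) (g : G), A n G g -> Pi n G g,
    (forall (G : digraph) (g : G), bijective (Phi G g)) /\ natural_family Phi.
Proof.
exists (@Phi n); split=> [G g | G G' h g hh P P' a eP eP' Q Q' c eQ eQ' ePQ].
  exact: Phi_bij.
subst Q.
have [c1 hc1] := is_pullback_exists (A_rep_pairmap eP).
apply: proj1_sig_inj; rewrite eQ' (Phi_val eP' (is_pullback_map hh hc1)).
apply/rst_classP; apply: Peq_map => //.
by move: eQ; rewrite (Phi_val eP hc1) => /rst_classP.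
Qed.
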